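(* Let $S=(v_1,\ldots,v_n)$ be an $(n,k)$-uframe, fix an index $i\in[n]$ with $|v_i|<1$, let $v\in\mathbb{R}^k$, and let $S'$ be obtained from $S$ by replacing $v_i$ with $v$. Then $S'$ is an $(n,k)$-frame and $$\det B_{S'}=\sqrt{\frac{1+|B_{S\setminus i}v_i|^2}{1+|B_{S\setminus i}v|^2}}.$$
   Context: An $(n,k)$-frame is an ordered $n$-tuple of vectors in $\mathbb{R}^k$ spanning $\mathbb{R}^k$. For a tuple $T=(w_j)$ of vectors in $\mathbb{R}^k$, $A_T=\sum_j w_j\otimes w_j=\sum_j w_jw_j^T$; if $A_T$ is positive definite, $B_T=A_T^{-1/2}$. An $(n,k)$-uframe is a frame $S$ with $A_S=I_k$. $S\setminus i$ denotes the tuple $(v_j)_{j\in[n],\,j\neq i}$. $|\cdot|$ is the Euclidean norm. *)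

From HB Require Import structures.
From mathcomp Require Import all_boot all_order all_algebra.
From Stdlib Require Import ClassicalEpsilon.
Set Implicit Arguments. Unset Strict Implicit. Unset Printing Implicit Defensive.
Import Order.TTheory GRing.Theory Num.Theory.
Local Open Scope ring_scope.

Definition vtuple (R : rcfType) (n k : nat) := 'I_n -> 'cV[R]_k.

Definition vnorm (R : rcfType) (k : nat) (x : 'cV[R]_k) : R :=
  Num.sqrt ((x^T *m x) 0 0).

Definition rows_of (R : rcfType) (n k : nat) (T : vtuple R n k) : 'M[R]_(n, k) :=
  \matrix_(j, l) T j l 0.

Definition is_frame (R : rcfType) (n k : nat) (T : vtuple R n k) : Prop :=
  row_full (rows_of T).

Definition A_of (R : rcfType) (n k : nat) (T : vtuple R n k) : 'M[R]_k :=
  \sum_(j < n) (T j *m (T j)^T).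

Definition is_uframe (R : rcfType) (n k : nat) (T : vtuple R n k) : Prop :=
  is_frame T /\ A_of T = 1%:M.

Definition pos_def (R : rcfType) (k : nat) (M : 'M[R]_k) : Prop :=
  M^T = M /\ forall x : 'cV[R]_k, x != 0 -> 0 < (x^T *m M *m x) 0 0.

(* A^{-1/2}: the (unique) positive definite B with B^2 = A^{-1}
   (meaningful when A is positive definite). *)
Definition inv_sqrt_mx (R : rcfType) (k : nat) (M : 'M[R]_k) : 'M[R]_k :=
  epsilon (inhabits 0) (fun B : 'M[R]_k => pos_def B /\ B *m B = invmx M).

Definition B_of (R : rcfType) (n k : nat) (T : vtuple R n k) : 'M[R]_k :=
  inv_sqrt_mx (A_of T).

Definition remove_at (R : rcfType) (n k : nat) (T : vtuple R n k) (i : 'I_n)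
  : vtuple R n.-1 k := fun j => T (lift i j).

Definition replace_at (R : rcfType) (n k : nat) (T : vtuple R n k) (i : 'I_n)
  (v : 'cV[R]_k) : vtuple R n k := fun j => if j == i then v else T j.

(* Put C := A_{S\i}.  Since S is a uframe, C = 1 - v_i v_i^T, which is positive
   definite by Cauchy-Schwarz because |v_i| < 1; hence A_{S'} = C + v v^T is
   positive definite too, in particular invertible, so S' is a frame.  The
   matrix determinant lemma gives det (C + w w^T) = det C (1 + w^T C^-1 w)
   = det C (1 + |B_{S\i} w|^2).  For w = v_i the left side is det 1 = 1, which
   determines det C, and for w = v it is det A_{S'}; the formula follows from
   det B_{S'} = (det A_{S'})^(-1/2).
   Since B is defined by choice, we also need that every positive definite M
   has an inverse square root: diagonalising M over R[i], the real symmetric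
   matrix h := p(M), for p interpolating t |-> t^(-1/4) on the spectrum of M,
   satisfies h^4 M = 1, and B := h^2 is positive definite. *)

From mathcomp Require Import all_boot all_order all_algebra.
From mathcomp Require Import complex spectral sesquilinear ring.
From Stdlib Require Import ClassicalEpsilon.
Import Order.TTheory GRing.Theory Num.Theory.
Set Implicit Arguments. Unset Strict Implicit.
Local Open Scope ring_scope.
Local Open Scope sesquilinear_scope.

Lemma quad_form_rank1 (R : comPzRingType) k (x u : 'cV[R]_k) :
  (x^T *m (u *m u^T) *m x) 0 0 = (u^T *m x) 0 0 ^+ 2.
Proof.
rewrite mulmxA -mulmxA -[x^T *m u]trmxK trmx_mul trmxK.
by rewrite [in LHS]mxE big_ord1 expr2; congr (_ * _); rewrite mxE.
Qed.

Section RealQuadraticForm.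
Variables (R : realDomainType) (k : nat).
Implicit Types u x : 'cV[R]_k.

Lemma cV_dotE u x : (u^T *m x) 0 0 = \sum_l u l 0 * x l 0.
Proof. by rewrite !mxE; apply: eq_bigr => l _; rewrite !mxE. Qed.

Lemma cV_dot_ge0 x : 0 <= (x^T *m x) 0 0.
Proof. by rewrite cV_dotE; apply: sumr_ge0 => l _; rewrite -expr2 sqr_ge0. Qed.

Lemma cV_dot_eq0 x : ((x^T *m x) 0 0 == 0) = (x == 0).
Proof.
rewrite cV_dotE psumr_eq0 => [|l _]; last by rewrite -expr2 sqr_ge0.
apply/allP/eqP => [x0|-> l _]; last by rewrite mxE mul0r eqxx.
apply/matrixP => l j; rewrite ord1 mxE.
by have /= := x0 l (mem_index_enum _); rewrite -expr2 sqrf_eq0 => /eqP.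
Qed.

Lemma cV_dot_gt0 x : x != 0 -> 0 < (x^T *m x) 0 0.
Proof. by rewrite lt_def cV_dot_ge0 cV_dot_eq0 andbT. Qed.

Lemma cV_cauchy_schwarz u x :
  (u^T *m x) 0 0 ^+ 2 <= (u^T *m u) 0 0 * (x^T *m x) 0 0.
Proof.
have [->|u_neq0] := eqVneq u 0.
  by rewrite trmx0 !mul0mx mxE mul0r expr0n.
have := cV_dot_gt0 u_neq0; rewrite !cV_dotE.
set a := \sum_l u l 0 * u l 0; set b := \sum_l x l 0 * x l 0.
set c := \sum_l u l 0 * x l 0 => a_gt0.
have lagrange_id : \sum_l (a * x l 0 - c * u l 0) ^+ 2 = a * (a * b - c ^+ 2).
  rewrite (eq_bigr (fun l => a ^+ 2 * (x l 0 * x l 0)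
      - (2 * a * c) * (u l 0 * x l 0) + c ^+ 2 * (u l 0 * u l 0))); last first.
    by move=> l _; ring.
  by rewrite big_split sumrB /= -!mulr_sumr -/a -/b -/c; ring.
have : 0 <= a * (a * b - c ^+ 2).
  by rewrite -lagrange_id; apply: sumr_ge0 => l _; apply: sqr_ge0.
by rewrite pmulr_rge0 // subr_ge0 mulrC.
Qed.

End RealQuadraticForm.

Lemma vnorm_sqr (R : rcfType) k (x : 'cV[R]_k) : vnorm x ^+ 2 = (x^T *m x) 0 0.
Proof. by rewrite sqr_sqrtr // cV_dot_ge0. Qed.

Lemma det1_add_rank1 (R : comNzRingType) k (a b : 'cV[R]_k) :
  \det (1%:M + a *m b^T) = 1 + (b^T *m a) 0 0.
Proof.
pose L : 'M[R]_(k + 1) := block_mx 1%:M 0 b^T 1%:M.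
pose X : 'M[R]_(k + 1) := block_mx 1%:M a (- b^T) 1%:M.
have LX : L *m X = block_mx 1%:M a 0 (1%:M + b^T *m a).
  by rewrite mulmx_block !mul1mx !mul0mx !addr0 !mulmx1 subrr addrC.
have XL : X *m L = block_mx (1%:M + a *m b^T) a 0 1%:M.
  by rewrite mulmx_block !mul1mx !mulmx0 !mulmx1 !add0r addNr.
have := congr1 determinant LX; have := congr1 determinant XL.
rewrite !det_mulmx !det_ublock det_lblock !det1 !mulr1 !mul1r => <- ->.
by rewrite det_mx11 !mxE.
Qed.

Lemma det_add_rank1 (F : fieldType) k (C : 'M[F]_k) (v : 'cV[F]_k) :
  C \in unitmx ->
  \det (C + v *m v^T) = \det C * (1 + (v^T *m invmx C *m v) 0 0).
Proof.
move=> C_unit.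
have -> : C + v *m v^T = C *m (1%:M + (invmx C *m v) *m v^T).
  by rewrite mulmxDr mulmx1 !mulmxA mulmxV // mul1mx.
by rewrite det_mulmx det1_add_rank1 mulmxA.
Qed.

Lemma poly_interpolation (F : fieldType) (f : F -> F) (s : seq F) :
  exists p : {poly F}, {in s, forall x, p.[x] = f x}.
Proof.
elim: s => [|y s [p p_s]]; first by exists 0.
have [y_s|y_notin_s] := boolP (y \in s).
  by exists p => x; rewrite inE => /orP[/eqP->|/p_s//]; apply: p_s.
pose q := \prod_(a <- s) ('X - a%:P).
have q_s x : x \in s -> q.[x] = 0.
  by move=> x_s; apply/rootP; rewrite root_prod_XsubC.
have q_y : q.[y] != 0 by rewrite -/(root q y) root_prod_XsubC.
exists (p + ((f y - p.[y]) / q.[y]) *: q) => x; rewrite inE hornerD hornerZ.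
case/orP => [/eqP->|x_s]; first by rewrite divfK // addrC subrK.
by rewrite (q_s x x_s) mulr0 addr0 p_s.
Qed.

Lemma horner_mx_sym (R : comNzRingType) k (M : 'M[R]_k.+1) (p : {poly R}) :
  M^T = M -> (horner_mx M p)^T = horner_mx M p.
Proof.
move=> M_sym; elim/poly_ind: p => [|p c IHp]; first by rewrite rmorph0 trmx0.
rewrite rmorphD rmorphM /= horner_mx_X horner_mx_C linearD /= tr_scalar_mx.
rewrite -mulmxE trmx_mul IHp M_sym; congr (_ + _).
by have := comm_horner_mx p (erefl (M *m M)).
Qed.

Lemma mul_conj_diag_mx (R : comNzRingType) k (P Q : 'M[R]_k) (a b : 'rV[R]_k) :
  P *m Q = 1%:M ->
  (Q *m diag_mx a *m P) *m (Q *m diag_mx b *m P) =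
  Q *m diag_mx (\row_j (a 0 j * b 0 j)) *m P.
Proof.
move=> PQ; rewrite !mulmxA -[Q *m _ *m P *m Q]mulmxA PQ mulmx1.
congr (_ *m _); rewrite -mulmxA; congr (_ *m _).
by apply/matrixP => i j; rewrite mul_diag_mx !mxE mulrnAr.
Qed.

Lemma inv_root4_expr4 (R : rcfType) (x : R) : 0 < x ->
  (Num.sqrt (Num.sqrt x))^-1 ^+ 4 * x = 1.
Proof.
move=> x_gt0; set y := Num.sqrt (Num.sqrt x).
have -> : x = y ^+ 4.
  by rewrite /y -[4%N]/(2 * 2)%N exprM !sqr_sqrtr ?sqrtr_ge0 ?ltW.
by rewrite exprVn mulVf // expf_neq0 // gt_eqF // !sqrtr_gt0.
Qed.

Section PositiveDefinite.
Variable R : rcfType.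
Local Notation toC := (real_complex R).
Local Notation mxC := (map_mx toC).
Local Notation mxRe := (map_mx (@complex.Re R)).
Local Notation mxIm := (map_mx (@complex.Im R)).

Lemma conj_real_complex (a : R) : (toC a)^* = toC a.
Proof. by apply: conj_Creal; rewrite complex_real. Qed.

Lemma mxC_ReIm m n (z : 'M[R[i]]_(m, n)) :
  z = mxC (mxRe z) + 'i *: mxC (mxIm z).
Proof. by apply/matrixP => a b; rewrite !mxE [LHS]complexE. Qed.

Lemma pos_def_rV_gt0 k (M : 'M[R]_k) (X : 'rV[R]_k) :
  pos_def M -> X != 0 -> 0 < (X *m M *m X^T) 0 0.
Proof.
by move=> [_ M_pos] X_neq0; have := M_pos X^T; rewrite trmxK trmx_eq0; apply.
Qed.

Lemma pos_def_rV_ge0 k (M : 'M[R]_k) (X : 'rV[R]_k) :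
  pos_def M -> 0 <= (X *m M *m X^T) 0 0.
Proof.
move=> M_pd; have [->|/(pos_def_rV_gt0 M_pd)/ltW//] := eqVneq X 0.
by rewrite !mul0mx mxE.
Qed.

Lemma quad_form_mxC k (M : 'M[R]_k) (z : 'rV[R[i]]_k) : M^T = M ->
  (z *m mxC M *m z ^t*) 0 0 =
  toC ((mxRe z *m M *m (mxRe z)^T) 0 0 + (mxIm z *m M *m (mxIm z)^T) 0 0).
Proof.
move=> M_sym; set X := mxRe z; set Y := mxIm z.
have z_ReIm : z = mxC X + 'i *: mxC Y by apply: mxC_ReIm.
have zt_ReIm : z ^t* = mxC X^T - 'i *: mxC Y^T.
  apply/matrixP => a b; rewrite z_ReIm !mxE rmorphD rmorphM /= conjCi.
  by rewrite !conj_real_complex mulNr.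
rewrite zt_ReIm {1}z_ReIm !mulmxDl !mulmxBr -!scalemxAl -!scalemxAr -!map_mxM.
have YX : (Y *m M *m X^T) 0 0 = (X *m M *m Y^T) 0 0.
  have -> : (Y *m M *m X^T) 0 0 = (Y *m M *m X^T)^T 0 0 by rewrite [RHS]mxE.
  by rewrite !trmx_mul !trmxK M_sym mulmxA.
have mulE (A : 'rV[R]_k) (B : 'cV[R]_k) : \sum_j A 0 j * B j 0 = (A *m B) 0 0.
  by rewrite mxE.
rewrite !mxE !mulE YX rmorphD /= mulrA -expr2 sqrCi mulN1r opprK.
by rewrite addrA subrK.
Qed.

Lemma pos_def_spectral k (M : 'M[R]_k) : pos_def M ->
  exists2 P : 'M[R[i]]_k, P \is unitarymx &
    exists2 r : 'rV[R]_k, (forall j, 0 < r 0 j) &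
      mxC M = invmx P *m diag_mx (mxC r) *m P.
Proof.
move=> M_pd; have [M_sym _] := M_pd.
have /orthomx_spectralP M_spec : mxC M \is normalmx.
  apply/normalmxP; suff -> : (mxC M)^t* = mxC M by [].
  by apply/matrixP => a b; rewrite !mxE conj_real_complex -[in RHS]M_sym mxE.
set P := spectralmx _ in M_spec; set d := spectral_diag _ in M_spec.
have P_unitary : P \is unitarymx by apply: spectral_unitarymx.
have P_unit := unitarymx_unit P_unitary.
have d_quad j : d 0 j = (row j P *m mxC M *m (row j P)^t*) 0 0.
  have diag_d : diag_mx d = P *m mxC M *m P^t*.
    by rewrite M_spec -invmx_unitary // !mulmxA mulmxV // mul1mx mulmxK.
  have -> : d 0 j = diag_mx d j j by rewrite mxE eqxx mulr1n.
  by rewrite diag_d -row_mul !mxE; apply: eq_bigr => l _; rewrite !mxE.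
have row_neq0 j : row j P != 0.
  apply: contraTneq P_unitary => Pj0; apply/negP => /row_unitarymxP/(_ j j).
  by rewrite Pj0 eqxx dotmxE mul0mx mxE => /esym/eqP; rewrite oner_eq0.
have d_pos j : exists2 a, 0 < a & d 0 j = toC a.
  rewrite d_quad quad_form_mxC //; eexists; last reflexivity.
  have [Re0|Re_neq0] := eqVneq (mxRe (row j P)) 0; last first.
    by rewrite ltr_pwDl ?pos_def_rV_gt0 ?pos_def_rV_ge0.
  have [Im0|Im_neq0] := eqVneq (mxIm (row j P)) 0; last first.
    by rewrite ltr_wpDl ?pos_def_rV_gt0 ?pos_def_rV_ge0.
  move: (row_neq0 j).
  by rewrite [row j P]mxC_ReIm Re0 Im0 !map_mx0 scaler0 addr0 eqxx.
pose r := \row_j complex.Re (d 0 j).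
have d_r : d = mxC r.
  by apply/matrixP => a j; rewrite ord1 !mxE; have [? _ ->] := d_pos j.
exists P => //; exists r; last by rewrite -d_r.
by move=> j; rewrite mxE; have [? ? ->] := d_pos j.
Qed.

Lemma pos_def_inv_root4 k (M : 'M[R]_k) : pos_def M ->
  exists2 h : 'M[R]_k, h^T = h & h *m h *m h *m h *m M = 1%:M.
Proof.
case: k M => [|k] M M_pd; first by exists 1%:M; apply/matrixP => -[].
have [M_sym _] := M_pd.
have [P /unitarymx_unit P_unit [r r_gt0 M_spec]] := pos_def_spectral M_pd.
pose f (x : R) := (Num.sqrt (Num.sqrt x))^-1.
have [p p_r] := poly_interpolation f [seq r 0 j | j <- enum 'I_k.+1].
exists (horner_mx M p); first exact: horner_mx_sym M_sym.
have pM_spec :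
    mxC (horner_mx M p) = invmx P *m diag_mx (mxC (\row_j f (r 0 j))) *m P.
  rewrite map_horner_mx M_spec (horner_mx_uconjC _ _ P_unit) horner_mx_diag.
  apply: (congr1 (fun d => invmx P *m diag_mx d *m P)); apply/matrixP => a j.
  by rewrite ord1 !mxE horner_map p_r //; apply/map_f/mem_enum.
apply: (@map_mx_inj _ _ toC); rewrite map_mx1 !map_mxM pM_spec M_spec.
rewrite !mul_conj_diag_mx ?mulmxV // -[RHS](mulVmx P_unit); congr (_ *m _).
rewrite -[RHS]mulmx1 -diag_const_mx; congr (_ *m diag_mx _).
apply/matrixP => a j; rewrite ord1 !mxE -!rmorphM -expr2 -!exprSr /f.
by rewrite inv_root4_expr4 ?r_gt0.
Qed.

Lemma pos_def_det_gt0 k (M : 'M[R]_k) : pos_def M -> 0 < \det M.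
Proof.
move=> /pos_def_inv_root4[h _ /(congr1 determinant)].
rewrite !det_mulmx det1 -expr2 -!exprSr => h4M.
have h4_gt0 : 0 < \det h ^+ 4.
  rewrite exprn_even_gt0 //=; apply/eqP => dh0.
  by move: h4M; rewrite dh0 expr0n mul0r => /eqP; rewrite eq_sym oner_eq0.
by rewrite -(pmulr_rgt0 _ h4_gt0) h4M ltr01.
Qed.

Lemma pos_def_unitmx k (M : 'M[R]_k) : pos_def M -> M \in unitmx.
Proof. by move/pos_def_det_gt0; rewrite unitmxE unitfE => /gt_eqF->. Qed.

Lemma pos_def_inv_sqrt_exists k (M : 'M[R]_k) : pos_def M ->
  exists B, pos_def B /\ B *m B = invmx M.
Proof.
move=> M_pd; have [h h_sym h4M] := pos_def_inv_root4 M_pd.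
have h_unit : h \in unitmx.
  have hM : h *m (h *m h *m h *m M) = 1%:M by rewrite !mulmxA.
  by have [] := mulmx1_unit hM.
exists (h *m h); split; last first.
  by rewrite -[LHS]mulmx1 -(mulmxV (pos_def_unitmx M_pd)) !mulmxA h4M mul1mx.
split=> [|x x_neq0]; first by rewrite trmx_mul h_sym.
have -> : x^T *m (h *m h) *m x = (h *m x)^T *m (h *m x).
  by rewrite trmx_mul h_sym !mulmxA.
apply: cV_dot_gt0; apply: contra x_neq0 => /eqP hx.
by rewrite -(mulKmx h_unit x) hx mulmx0.
Qed.

Lemma inv_sqrt_mxP k (M : 'M[R]_k) : pos_def M ->
  pos_def (inv_sqrt_mx M) /\ inv_sqrt_mx M *m inv_sqrt_mx M = invmx M.
Proof. by move/pos_def_inv_sqrt_exists; apply: epsilon_spec. Qed.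

Lemma det_inv_sqrt_mx k (M : 'M[R]_k) : pos_def M ->
  \det (inv_sqrt_mx M) = Num.sqrt (\det M)^-1.
Proof.
move=> M_pd; have [B_pd BB] := inv_sqrt_mxP M_pd.
rewrite -det_inv -BB det_mulmx -expr2 sqrtr_sqr ger0_norm //.
exact: ltW (pos_def_det_gt0 B_pd).
Qed.

Lemma pos_def_1_sub_rank1 k (u : 'cV[R]_k) :
  (u^T *m u) 0 0 < 1 -> pos_def (1%:M - u *m u^T).
Proof.
move=> u_lt1; split=> [|x x_neq0].
  by rewrite linearB /= tr_scalar_mx trmx_mul trmxK.
rewrite mulmxBr mulmxBl mulmx1 mxE [X in _ + X]mxE quad_form_rank1 subr_gt0.
apply: le_lt_trans (cV_cauchy_schwarz u x) _.
by rewrite gtr_pMl // cV_dot_gt0.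
Qed.

Lemma pos_def_add_rank1 k (v : 'cV[R]_k) (C : 'M[R]_k) :
  pos_def C -> pos_def (v *m v^T + C).
Proof.
move=> [C_sym C_pos]; split=> [|x x_neq0].
  by rewrite linearD /= trmx_mul trmxK C_sym.
rewrite mulmxDr mulmxDl mxE quad_form_rank1.
by rewrite ltr_wpDl ?sqr_ge0 ?C_pos.
Qed.

Lemma quad_invmx_inv_sqrt k (C : 'M[R]_k) (w : 'cV[R]_k) : pos_def C ->
  (w^T *m invmx C *m w) 0 0 = vnorm (inv_sqrt_mx C *m w) ^+ 2.
Proof.
move=> /inv_sqrt_mxP[[B_sym _] BB].
by rewrite vnorm_sqr trmx_mul B_sym -BB !mulmxA.
Qed.

Lemma det_pos_def_add_rank1 k (v : 'cV[R]_k) (C : 'M[R]_k) : pos_def C ->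
  \det (v *m v^T + C) = \det C * (1 + vnorm (inv_sqrt_mx C *m v) ^+ 2).
Proof.
move=> C_pd.
by rewrite addrC det_add_rank1 ?pos_def_unitmx // quad_invmx_inv_sqrt.
Qed.

End PositiveDefinite.

Section Frames.
Variables (R : rcfType) (n k : nat).
Implicit Types (T : vtuple R n k) (v : 'cV[R]_k).

Lemma rows_of_gram T : (rows_of T)^T *m rows_of T = A_of T.
Proof.
apply/matrixP => l m; rewrite /A_of summxE !mxE; apply: eq_bigr => j _.
by rewrite !mxE big_ord1 !mxE.
Qed.

Lemma A_unit_is_frame T : A_of T \in unitmx -> is_frame T.
Proof.
move=> /mxrank_unit A_full; rewrite /is_frame /row_full eqn_leq rank_leq_col /=.
by rewrite -{1}A_full -rows_of_gram mxrankM_maxr.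
Qed.

Lemma A_of_remove T (i : 'I_n) : A_of T = T i *m (T i)^T + A_of (remove_at T i).
Proof. by rewrite /A_of (bigD1_ord i). Qed.

Lemma A_of_replace T (i : 'I_n) v :
  A_of (replace_at T i v) = v *m v^T + A_of (remove_at T i).
Proof.
rewrite (A_of_remove _ i) /remove_at /replace_at eqxx; congr (_ + _).
by apply: eq_bigr => j _; rewrite eq_sym (negPf (neq_lift i j)).
Qed.

End Frames.

Unset Implicit Arguments.

Theorem lemma5 (R : rcfType) (n k : nat) (S : vtuple R n k) (i : 'I_n)
  (v : 'cV[R]_k) :
  is_uframe S -> vnorm (S i) < 1 ->
  is_frame (replace_at S i v) /\
  \det (B_of (replace_at S i v)) =
    Num.sqrt ((1 + vnorm (B_of (remove_at S i) *m S i) ^+ 2) /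
              (1 + vnorm (B_of (remove_at S i) *m v) ^+ 2)).
Proof.
move=> [_ A_S] Si_lt1; rewrite /B_of.
set C := A_of (remove_at S i); set nu := vnorm (inv_sqrt_mx C *m S i) ^+ 2.
have C_pd : pos_def C.
  have -> : C = 1%:M - S i *m (S i)^T.
    by rewrite -A_S (A_of_remove S i) [S i *m _ + _]addrC addrK.
  by apply: pos_def_1_sub_rank1; rewrite -vnorm_sqr expr_lt1 ?sqrtr_ge0.
have A'_pd : pos_def (A_of (replace_at S i v)).
  by rewrite A_of_replace; apply: pos_def_add_rank1.
split; first exact/A_unit_is_frame/pos_def_unitmx.
have det_C : \det C = (1 + nu)^-1.
  have nu_neq0 : 1 + nu != 0 by rewrite gt_eqF // ltr_pwDl ?sqr_ge0.
  rewrite -[LHS](mulfK nu_neq0) -det_pos_def_add_rank1 //.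
  by rewrite -A_of_remove A_S det1 mul1r.
rewrite det_inv_sqrt_mx // A_of_replace det_pos_def_add_rank1 //.
by rewrite det_C invfM invrK.
Qed.
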